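(* For every $\eta\in(0,\tfrac14)$, the Multiplicative Weights mechanism $M^*_\eta$ is $4\eta$-approximately truthful.
   Context: Setting: $n$ forecasters, $m$ binary events with outcomes $\vec y\in\{0,1\}^m$; forecaster $i$ has beliefs $p_i\in[0,1]^m$ (believing events independent) and reports $r_i\in[0,1]^m$. Quadratic score $S(q,y)=1-(y-q)^2$. Multiplicative Weights: $M^*_\eta(R,\vec y)_i=\exp(\eta\sum_tS(r_{it},y_t))/\sum_j\exp(\eta\sum_tS(r_{jt},y_t))$. $M(R;p_i)=\mathbb{E}_{\vec y\sim p_i}M(R,\vec y)$ with $y_t\sim\mathrm{Bernoulli}(p_{it})$ independently. For fixed $p_i$, $\hat r_i$ strictly dominates $r_i$ if $M(\hat r_i,R_{-i};p_i)_i>M(r_i,R_{-i};p_i)_i$ for all $R_{-i}$; $r_i$ is undominated if nothing strictly dominates it. A mechanism is $\gamma$-approximately truthful if for all $p_i$ an undominated report exists and every undominated report $r_i$ satisfies $\|r_i-p_i\|_\infty\le\gamma$. *)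

From HB Require Import structures.
From mathcomp Require Import all_boot all_order all_algebra.
From mathcomp Require Import reals sequences exp.
Set Implicit Arguments. Unset Strict Implicit. Unset Printing Implicit Defensive.
Import Order.TTheory GRing.Theory Num.Theory.
Local Open Scope ring_scope.

Section Forecast.
Variables (R : realType) (n m : nat).

Definition vec := 'I_m -> R.
Definition profile := 'I_n -> vec.
Definition outcome := {ffun 'I_m -> bool}.

Definition valid (r : vec) : Prop := forall t, 0 <= r t <= 1.

Definition qscore (q : R) (y : bool) : R := 1 - ((y%:R : R) - q) ^+ 2.

Definition MW (eta : R) (Rp : profile) (y : outcome) (i : 'I_n) : R :=
  expR (eta * \sum_(t < m) qscore (Rp i t) (y t)) /
  \sum_(j < n) expR (eta * \sum_(t < m) qscore (Rp j t) (y t)).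

Definition prob_y (p : vec) (y : outcome) : R :=
  \prod_(t < m) (if y t then p t else 1 - p t).

Definition mechanism := profile -> outcome -> 'I_n -> R.

Definition expected (M : mechanism) (Rp : profile) (p : vec) (i : 'I_n) : R :=
  \sum_(y : outcome) prob_y p y * M Rp y i.

Definition upd (Rp : profile) (i : 'I_n) (r : vec) : profile :=
  fun j => if j == i then r else Rp j.

Definition strictly_dominates (M : mechanism) (i : 'I_n) (p rhat r : vec) : Prop :=
  forall Rp : profile, (forall j, j != i -> valid (Rp j)) ->
    expected M (upd Rp i rhat) p i > expected M (upd Rp i r) p i.

Definition undominated (M : mechanism) (i : 'I_n) (p r : vec) : Prop :=
  valid r /\ ~ (exists rhat, valid rhat /\ strictly_dominates M i p rhat r).

(* gamma-approximate truthfulness; ||r - p||_oo <= gamma written coordinatewise *)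
Definition approx_truthful (M : mechanism) (gamma : R) : Prop :=
  forall (i : 'I_n) (p : vec), valid p ->
    (exists r, undominated M i p r) /\
    (forall r, undominated M i p r -> forall t, `|r t - p t| <= gamma).

End Forecast.

From HB Require Import structures.
From mathcomp Require Import all_boot all_order all_algebra.
From mathcomp Require Import reals sequences exp.
From mathcomp Require Import ring lra.
Set Implicit Arguments. Unset Strict Implicit. Unset Printing Implicit Defensive.
Import Order.TTheory GRing.Theory Num.Theory.
Local Open Scope ring_scope.

(* Existence: the truthful report p is undominated.  Against opponents who all report
   some rh, reporting rh earns exactly 1/n; by convexity of the share (a tangent-line
   bound) reporting p earns at least 1/n + c (1 - E_p[w(rh)/w(p)]), and the expected
   weight ratio is at most 1 (a per-event Hoeffding-type bound, multiplied over the
   independent events).  So no rh beats p against every opponent profile.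

   Accuracy: if |r_t - p_t| > 4 eta, moving coordinate t to p_t -/+ 4 eta strictly
   dominates r.  Pairing each outcome with the one differing only in event t, the
   expected payoff becomes a positive combination of two-outcome expected shares
   (pair_share); in each pair the opponents' weights differ by a factor at most
   expR eta, and an elementary two-state inequality (two_state_share_lt) shows that
   the move strictly increases every pair_share. *)

Section ExpBounds.
Variable R : realType.
Implicit Types a b u : R.

(* The secant of expR between b and a lies between its tangents at b and a. *)
Lemma expR_sub_ge a b : expR b * (a - b) <= expR a - expR b.
Proof.
have h := expR_ge1Dx (a - b); rewrite expRB ler_pdivlMr ?expR_gt0 // in h.
lra.
Qed.

Lemma expR_sub_le a b : expR a - expR b <= expR a * (a - b).
Proof.
have h := expR_ge1Dx (b - a); rewrite expRB ler_pdivlMr ?expR_gt0 // in h.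
lra.
Qed.

Lemma expR_le_shift a b eta : a - b <= eta -> expR a <= expR eta * expR b.
Proof. by move=> h; rewrite -expRD ler_expR; lra. Qed.

(* 1 - u <= expR (- u), multiplied through by expR u. *)
Lemma expR_1B_le1 u : expR u * (1 - u) <= 1.
Proof.
have h := expR_ge1Dx (- u).
have hu : expR u * expR (- u) = 1 by rewrite -expRD subrr expR0.
have : expR u * (1 + - u) <= expR u * expR (- u) by rewrite ler_wpM2l ?expR_ge0.
lra.
Qed.

Lemma expR_le_quad u : u <= 1/2 -> expR u <= 1 + u + 2 * u ^+ 2.
Proof.
move=> hu; have k := expR_1B_le1 u.
have k2 : 1 <= (1 + u + 2 * u ^+ 2) * (1 - u).
  have : 0 <= u ^+ 2 * (1 - 2 * u) by rewrite mulr_ge0 ?sqr_ge0 //; lra.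
  have -> : (1 + u + 2 * u ^+ 2) * (1 - u) = 1 + u ^+ 2 * (1 - 2 * u) by ring.
  lra.
have hp : 0 < 1 - u by lra.
rewrite -(ler_pM2r hp); lra.
Qed.

Lemma mean_expR_le p u1 u0 : 0 <= p <= 1 -> u1 <= 1/2 -> u0 <= 1/2 ->
  p * u1 + (1 - p) * u0 = 0 ->
  p * expR u1 + (1 - p) * expR u0 <= 1 + 2 * (p * u1 ^+ 2 + (1 - p) * u0 ^+ 2).
Proof.
move=> /andP[hp0 hp1] hu1 hu0 hmean.
have a1 : p * expR u1 <= p * (1 + u1 + 2 * u1 ^+ 2) by rewrite ler_wpM2l ?expR_le_quad.
have a0 : (1 - p) * expR u0 <= (1 - p) * (1 + u0 + 2 * u0 ^+ 2).
  by rewrite ler_wpM2l ?expR_le_quad //; lra.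
have -> : 1 + 2 * (p * u1 ^+ 2 + (1 - p) * u0 ^+ 2) =
  p * (1 + u1 + 2 * u1 ^+ 2) + (1 - p) * (1 + u0 + 2 * u0 ^+ 2) - (p * u1 + (1 - p) * u0).
  by ring.
lra.
Qed.

End ExpBounds.

Section QuadraticScore.
Variable R : realType.
Implicit Types p q x : R.

Lemma qscore_true x : qscore x true = 1 - (1 - x) ^+ 2.
Proof. by rewrite /qscore /= mulr1n. Qed.

Lemma qscore_false x : qscore x false = 1 - x ^+ 2.
Proof. by rewrite /qscore /= mulr0n sub0r sqrrN. Qed.

Lemma qscore_flip q b : qscore (1 - q) b = qscore q (~~ b).
Proof. by case: b; rewrite /= qscore_true qscore_false; congr (1 - _ ^+ 2); ring. Qed.

Lemma qscore_bounds q b : 0 <= q <= 1 -> 0 <= qscore q b <= 1.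
Proof. by case/andP=> h0 h1; case: b; rewrite ?qscore_true ?qscore_false; apply/andP; split; nra. Qed.

Lemma expR_score_shift eta (q q' : R) b b' : 0 < eta -> 0 <= q <= 1 -> 0 <= q' <= 1 ->
  expR (eta * qscore q b) <= expR eta * expR (eta * qscore q' b').
Proof.
move=> eta_gt0 /(qscore_bounds b)/andP[h0 h1] /(qscore_bounds b')/andP[h0' h1'].
have e1 : eta * qscore q b <= eta * 1 by rewrite ler_wpM2l // ltW.
have e2 : 0 <= eta * qscore q' b' by rewrite mulr_ge0 // ltW.
by apply: expR_le_shift; lra.
Qed.

(* This is
   the one-event form of a Hoeffding-type bound. *)
Lemma expected_score_gain_le1 eta p x : 0 < eta -> eta < 1/4 -> 0 <= p <= 1 -> 0 <= x <= 1 ->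
  p * expR (eta * (qscore x true - qscore p true)) +
  (1 - p) * expR (eta * (qscore x false - qscore p false)) <= 1.
Proof.
move=> he0 he1 hp hx; have /andP[hp0 hp1] := hp; have /andP[hx0 hx1] := hx.
set d := x - p; set u1 := 2 * eta * d * (1 - p); set u0 := - (2 * eta * d * p).
set v := eta * d ^+ 2.
have -> : eta * (qscore x true - qscore p true) = u1 + - v.
  by rewrite /u1 /v /d !qscore_true; ring.
have -> : eta * (qscore x false - qscore p false) = u0 + - v.
  by rewrite /u0 /v /d !qscore_false; ring.
rewrite !expRD !mulrA -mulrDl.
have hv : 0 <= v by rewrite mulr_ge0 ?sqr_ge0 //; lra.
have hed : -(1/4) <= eta * d <= 1/4 by apply/andP; split; rewrite /d; nra.
have hmean := mean_expR_le hp (_ : u1 <= 1/2) (_ : u0 <= 1/2) (_ : p * u1 + (1 - p) * u0 = 0).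
have {}hmean : p * expR u1 + (1 - p) * expR u0 <= 1 + v.
  apply: le_trans (hmean _ _ _) _.
  - by rewrite /u1 (_ : 2 * eta * d = 2 * (eta * d)); [nra | ring].
  - by rewrite /u0 (_ : 2 * eta * d = 2 * (eta * d)); [nra | ring].
  - by rewrite /u1 /u0; ring.
  have -> : p * u1 ^+ 2 + (1 - p) * u0 ^+ 2 = v * (4 * eta * (p * (1 - p))).
    by rewrite /u1 /u0 /v; ring.
  have hpp : 0 <= p * (1 - p) <= 1/4.
    by apply/andP; split; [rewrite mulr_ge0 //; lra | have := sqr_ge0 (p - 1/2); nra].
  have : 4 * eta * (p * (1 - p)) <= 1/2 by nra.
  nra.
have := expR_1B_le1 (- v); rewrite opprK => hg.
have := expR_gt0 (- v); nra.
Qed.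

(* Reporting x > p + 4 eta instead of p + 4 eta: with s the sum of the two reports,
   the score lost when the event happens (rate p (2 - s)) is smaller than the score
   gained when it does not (rate (1 - p) s), with room for a factor expR (4 eta). *)
Lemma overreport_margin eta p x : 0 < eta -> eta < 1/4 -> 0 <= p -> p + 4 * eta < x -> x <= 1 ->
  expR (4 * eta) * (p * (2 - (x + (p + 4 * eta)))) < (1 - p) * (x + (p + 4 * eta)).
Proof.
move=> he0 he1 hp0 hx hx1; set s := x + (p + 4 * eta).
have es : s = x + (p + 4 * eta) by [].
have hs : p * (2 - s) < (1 - 4 * eta) * ((1 - p) * s).
  have hs2 : (1 - p) * s <= 2 by nra.
  have : 4 * eta * ((1 - p) * s) <= 4 * eta * 2 by rewrite ler_wpM2l //; lra.
  lra.
have hps : 0 <= p * (2 - s) by rewrite mulr_ge0 //; lra.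
have hE := expR_1B_le1 (4 * eta); have hE0 := expR_ge0 (4 * eta).
have : (1 - 4 * eta) * (expR (4 * eta) * (p * (2 - s))) < (1 - 4 * eta) * ((1 - p) * s) by nra.
by rewrite ltr_pM2l //; lra.
Qed.

End QuadraticScore.

Section Share.
Variable R : realType.

(* The share of a forecaster with weight a against a total weight C of the others. *)
Definition share (a C : R) : R := a / (a + C).

Lemma share_sub (a b C : R) : 0 < a -> 0 < b -> 0 < C ->
  share a C - share b C = C * (a - b) / ((a + C) * (b + C)).
Proof. by move=> ha hb hC; rewrite /share; field; rewrite !gt_eqF ?addr_gt0. Qed.

(* Convexity of t |-> 1 / (1 + (N - 1) t): its graph lies above the tangent at t = 1,
   written here with t = b / a. *)
Lemma share_ge_tangent (N a b : R) : 1 <= N -> 0 < a -> 0 < b ->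
  1 / N + (N - 1) / N ^+ 2 * (1 - b / a) <= share a ((N - 1) * b).
Proof.
move=> hN ha hb; have hNb : 0 <= (N - 1) * b by apply: mulr_ge0; lra.
have hD : 0 < a + (N - 1) * b by lra.
rewrite -subr_ge0 (_ : share _ _ - _ = ((N - 1) * (a - b)) ^+ 2 / (N ^+ 2 * a * (a + (N - 1) * b))).
  by apply: divr_ge0; [exact: sqr_ge0 | apply: mulr_ge0; [apply: mulr_ge0; [exact: sqr_ge0 | lra] | lra]].
by rewrite /share; field; rewrite !gt_eqF //; lra.
Qed.

Lemma two_state_share_lt (E p alpha beta z0 z0' z1 z1' C0 C1 : R) :
  0 <= p <= 1 -> 0 < C0 -> 0 < C1 -> 0 < z0 -> 0 < z0' -> 0 < z1' -> z1' <= z1 ->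
  C1 <= E * C0 -> C0 <= E * C1 -> z0' <= E * z1' -> z0 <= E * z1 -> z1 <= E * z0 ->
  z1 - z1' <= z1 * alpha -> z0 * beta <= z0' - z0 -> E * E * E * E * p * alpha < (1 - p) * beta ->
  p * share z1 C1 + (1 - p) * share z0 C0 < p * share z1' C1 + (1 - p) * share z0' C0.
Proof.
move=> /andP[hp0 hp1] hC0 hC1 hz0 hz0' hz1' hz1 hC10 hC01 h0'1' h01 h10 hloss hgain hkey.
have hz1p : 0 < z1 by lra.
have hE : 0 <= E by nra.
set D0 := (z0' + C0) * (z0 + C0); set D1 := (z1 + C1) * (z1' + C1).
have D0p : 0 < D0 by rewrite mulr_gt0 ?addr_gt0.
have D1p : 0 < D1 by rewrite mulr_gt0 ?addr_gt0.
have hD : D0 <= E * E * D1.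
  have -> : E * E * D1 = (E * (z1' + C1)) * (E * (z1 + C1)) by rewrite /D1; ring.
  by apply: ler_pM; rewrite ?mulrDr ?lerD //; apply: addr_ge0; apply: ltW.
have hloss' : C1 * (z1 - z1') * D0 <= E * E * E * E * alpha * (C0 * z0 * D1).
  have ha : 0 <= alpha by nra.
  have -> : E * E * E * E * alpha * (C0 * z0 * D1) = (E * C0) * (E * z0 * alpha) * (E * E * D1).
    by ring.
  have hdz : 0 <= z1 - z1' by lra.
  apply: ler_pM => //; [exact: mulr_ge0 (ltW hC1) hdz | exact: ltW | ].
  apply: ler_pM => //; first exact: ltW.
  by apply: (le_trans hloss); apply: ler_wpM2r.
have hgain' : (1 - p) * beta * (C0 * z0 * D1) <= (1 - p) * C0 * (z0' - z0) * D1.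
  have -> : (1 - p) * beta * (C0 * z0 * D1) = (1 - p) * C0 * (z0 * beta) * D1 by ring.
  apply: ler_wpM2r; first exact: ltW.
  by apply: ler_wpM2l => //; apply: mulr_ge0 (ltW hC0); lra.
have hcross : p * C1 * (z1 - z1') * D0 < (1 - p) * C0 * (z0' - z0) * D1.
  have hpos : 0 < C0 * z0 * D1 by apply: mulr_gt0 => //; apply: mulr_gt0.
  have s1 := ler_wpM2l hp0 hloss'.
  have s2 : E * E * E * E * p * alpha * (C0 * z0 * D1) < (1 - p) * beta * (C0 * z0 * D1).
    by rewrite ltr_pM2r.
  lra.
have e1 : p * share z1 C1 - p * share z1' C1 = p * (C1 * (z1 - z1') / D1).
  by rewrite -mulrBr share_sub.
have e0 : (1 - p) * share z0' C0 - (1 - p) * share z0 C0 = (1 - p) * (C0 * (z0' - z0) / D0).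
  by rewrite -mulrBr share_sub.
suff : p * (C1 * (z1 - z1') / D1) < (1 - p) * (C0 * (z0' - z0) / D0) by lra.
by rewrite !mulrA ltr_pdivrMr // [X in _ < X]mulrAC ltr_pdivlMr.
Qed.

End Share.

Section PairShare.
Variable R : realType.
Variables (eta w : R).

(* Expected share of a forecaster who reports x on one event of probability p, when
   the rest of the outcome is fixed: w is its weight from the other events and C1, C0
   the total weights of the others when the event happens or not. *)
Definition pair_share (C0 C1 p x : R) : R :=
  p * share (w * expR (eta * qscore x true)) C1 +
  (1 - p) * share (w * expR (eta * qscore x false)) C0.

Definition comparable_weights (C0 C1 : R) : Prop :=
  [/\ 0 < C0, 0 < C1, C0 <= expR eta * C1 & C1 <= expR eta * C0].

Lemma pair_share_lt_up (C0 C1 p x : R) :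
  0 < eta -> eta < 1/4 -> 0 < w -> comparable_weights C0 C1 ->
  0 <= p -> p + 4 * eta < x -> x <= 1 ->
  pair_share C0 C1 p x < pair_share C0 C1 p (p + 4 * eta).
Proof.
move=> eta_gt0 eta_lt w_gt0 [C0_gt0 C1_gt0 C01 C10] hp0 hx hx1.
have hx' : 0 <= p + 4 * eta <= 1 by apply/andP; split; lra.
have hxb : 0 <= x <= 1 by apply/andP; split; lra.
have hkey : expR eta * expR eta * expR eta * expR eta * (p * (2 - (x + (p + 4 * eta)))) <
    (1 - p) * (x + (p + 4 * eta)).
  rewrite -!expRD (_ : eta + eta + eta + eta = 4 * eta); last by ring.
  exact: overreport_margin.
set x' := p + 4 * eta in hx hx' hkey *; set s := x + x' in hkey *; set E := expR eta in hkey *.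
have ex' : x' = p + 4 * eta by [].
have hd : 0 < eta * (x - x') by rewrite mulr_gt0 //; lra.
have hw := ltW w_gt0; have hE := expR_gt0 eta.
rewrite /pair_share; apply: (@two_state_share_lt _ E p
  (eta * qscore x true - eta * qscore x' true) (eta * qscore x' false - eta * qscore x false)).
- by apply/andP; split; lra.
- exact: C0_gt0.
- exact: C1_gt0.
- by rewrite mulr_gt0 ?expR_gt0.
- by rewrite mulr_gt0 ?expR_gt0.
- by rewrite mulr_gt0 ?expR_gt0.
- apply: ler_wpM2l => //; rewrite ler_expR; apply: ler_wpM2l; first exact: ltW.
  have : 0 <= (x - x') * (2 - x - x') by rewrite mulr_ge0 //; lra.
  rewrite !qscore_true; nra.
- exact: C10.
- exact: C01.
- by rewrite mulrCA; apply: ler_wpM2l hw _ _ (expR_score_shift _ _ eta_gt0 hx' hx').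
- by rewrite mulrCA; apply: ler_wpM2l hw _ _ (expR_score_shift _ _ eta_gt0 hxb hxb).
- by rewrite mulrCA; apply: ler_wpM2l hw _ _ (expR_score_shift _ _ eta_gt0 hxb hxb).
- by rewrite -[X in X <= _]mulrBr -mulrA; exact: ler_wpM2l hw _ _ (expR_sub_le _ _).
- by rewrite -[X in _ <= X]mulrBr -mulrA; exact: ler_wpM2l hw _ _ (expR_sub_ge _ _).
have -> : eta * qscore x true - eta * qscore x' true = eta * (x - x') * (2 - s).
  by rewrite /s !qscore_true; ring.
have -> : eta * qscore x' false - eta * qscore x false = eta * (x - x') * s.
  by rewrite /s !qscore_false; ring.
have -> : E * E * E * E * p * (eta * (x - x') * (2 - s)) =
  eta * (x - x') * (E * E * E * E * (p * (2 - s))) by ring.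
have -> : (1 - p) * (eta * (x - x') * s) = eta * (x - x') * ((1 - p) * s) by ring.
by rewrite ltr_pM2l.
Qed.

Lemma pair_share_flip (C0 C1 p x : R) :
  pair_share C0 C1 p x = pair_share C1 C0 (1 - p) (1 - x).
Proof. by rewrite /pair_share !qscore_flip /=; ring. Qed.

Lemma pair_share_lt_down (C0 C1 p x : R) :
  0 < eta -> eta < 1/4 -> 0 < w -> comparable_weights C0 C1 ->
  p <= 1 -> x < p - 4 * eta -> 0 <= x ->
  pair_share C0 C1 p x < pair_share C0 C1 p (p - 4 * eta).
Proof.
move=> eta_gt0 eta_lt w_gt0 [C0_gt0 C1_gt0 C01 C10] hp1 hx hx0.
rewrite !(pair_share_flip C0 C1) (_ : 1 - (p - 4 * eta) = 1 - p + 4 * eta); last by ring.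
by apply: pair_share_lt_up => //; lra.
Qed.

End PairShare.

Section Mechanism.
Variables (R : realType) (n m : nat) (eta : R).

Definition total_score (r : vec R m) (y : outcome m) : R := \sum_(t < m) qscore (r t) (y t).

Definition weight (r : vec R m) (y : outcome m) : R := expR (eta * total_score r y).

Definition others_weight (Rp : profile R n m) (i : 'I_n) (y : outcome m) : R :=
  \sum_(j | j != i) weight (Rp j) y.

Lemma MW_upd (Rp : profile R n m) i (r : vec R m) y :
  MW eta (upd Rp i r) y i = share (weight r y) (others_weight Rp i y).
Proof.
rewrite /MW /upd /share eqxx (bigD1 i) //= eqxx; congr (_ / (_ + _)).
by apply: eq_bigr => j /negbTE ->.
Qed.

Lemma others_weight_const (r : vec R m) i y :
  others_weight (fun=> r) i y = (n%:R - 1) * weight r y.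
Proof.
have h : \sum_(j < n) weight r y = weight r y + others_weight (fun=> r) i y := bigD1 i isT.
by rewrite sumr_const card_ord -mulr_natl in h; rewrite mulrBl h; ring.
Qed.

Lemma prob_y_ge0 (p : vec R m) y : valid p -> 0 <= prob_y p y.
Proof. by move=> vp; apply: prodr_ge0 => t _; have /andP[? ?] := vp t; case: ifP; lra. Qed.

Lemma prob_y_sum1 (p : vec R m) : \sum_(y : outcome m) prob_y p y = 1.
Proof.
rewrite /prob_y -(bigA_distr_bigA (fun t (b : bool) => if b then p t else 1 - p t)) /=.
by rewrite big1 // => t _; rewrite big_bool /= addrC subrK.
Qed.

(* Multi-event form of expected_score_gain_le1: outcomes are independent, so the
   expectation of the weight ratio factorizes over the events. *)
Lemma expected_weight_ratio_le1 (p h : vec R m) : 0 < eta -> eta < 1/4 -> valid p -> valid h ->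
  \sum_(y : outcome m) prob_y p y * (weight h y / weight p y) <= 1.
Proof.
move=> he0 he1 vp vh.
pose F (t : 'I_m) (b : bool) := (if b then p t else 1 - p t) *
   expR (eta * (qscore (h t) b - qscore (p t) b)).
rewrite (eq_bigr (fun y : outcome m => \prod_t F t (y t))) => [|y _]; last first.
  rewrite /weight -expRB -mulrBr /total_score -sumrB mulr_sumr expR_sum /prob_y -big_split /=.
  by apply: eq_bigr.
rewrite -bigA_distr_bigA /=; apply: prodr_ile1 => t _; rewrite big_bool /F /=.
have /andP[? ?] := vp t; apply/andP; split; last exact: expected_score_gain_le1.
by rewrite addr_ge0 // mulr_ge0 ?expR_ge0 //; lra.
Qed.

(* Truthful reporting is undominated: against opponents who all report rh, reporting
   rh earns exactly 1/n, while by the tangent bound and the ratio bound reporting the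
   belief p earns at least 1/n. *)
Lemma truthful_undominated (i : 'I_n) (p : vec R m) : (2 <= n)%N -> 0 < eta -> eta < 1/4 ->
  valid p -> undominated (MW eta) i p p.
Proof.
move=> hn he0 he1 vp; split => // -[rh [vrh Hd]].
have := Hd (fun=> rh) (fun _ _ => vrh); apply/negP; rewrite -leNgt /expected.
have hN : 1 <= (n%:R : R) by rewrite (ler_nat R 1 n); apply: leq_trans hn.
set c := (n%:R - 1) / (n%:R : R) ^+ 2.
have hc : 0 <= c by rewrite divr_ge0 ?sqr_ge0 //; lra.
have share_rh y : MW eta (upd (fun=> rh) i rh) y i = 1 / n%:R.
  rewrite MW_upd others_weight_const /share.
  have hw : 0 < weight rh y by exact: expR_gt0.
  rewrite (_ : weight rh y + _ = n%:R * weight rh y); last by ring.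
  by field; rewrite !gt_eqF //; lra.
have share_p y : 1 / n%:R + c * (1 - weight rh y / weight p y) <= MW eta (upd (fun=> rh) i p) y i.
  by rewrite MW_upd others_weight_const share_ge_tangent ?expR_gt0.
rewrite (eq_bigr _ (fun y _ => congr1 (fun z => prob_y p y * z) (share_rh y))).
rewrite -mulr_suml prob_y_sum1 mul1r.
apply: le_trans (ler_sum _ (fun y _ => ler_wpM2l (prob_y_ge0 y vp) (share_p y))).
rewrite (eq_bigr (fun y => 1 / n%:R * prob_y p y + c * prob_y p y -
    c * (prob_y p y * (weight rh y / weight p y)))); last by move=> y _; ring.
rewrite sumrB big_split /= -!mulr_sumr prob_y_sum1.
have := expected_weight_ratio_le1 he0 he1 vp vrh; nra.
Qed.

End Mechanism.

Section Domination.
Variables (R : realType) (n m : nat) (eta : R).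
Implicit Types (t : 'I_m) (y : outcome m) (p r v : vec R m).

Definition flip (t : 'I_m) (y : outcome m) : outcome m :=
  [ffun s => if s == t then ~~ y s else y s].

Lemma flipK t : involutive (flip t).
Proof.
move=> y; apply/ffunP => s; rewrite !ffunE.
by case: (s =P t) => [->|_]; rewrite ?eqxx ?negbK.
Qed.

Lemma flip_at t y : flip t y t = ~~ y t.
Proof. by rewrite ffunE eqxx. Qed.

Lemma flip_off t y s : s != t -> flip t y s = y s.
Proof. by move=> h; rewrite ffunE (negbTE h). Qed.

Lemma sum_outcome_pairs t (F : outcome m -> R) :
  \sum_(y : outcome m) F y = \sum_(y : outcome m | ~~ y t) (F y + F (flip t y)).
Proof.
rewrite (bigID (fun y : outcome m => y t)) /= addrC big_split /=; congr (_ + _).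
rewrite (reindex_inj (can_inj (flipK t))) /=.
by apply: eq_big => y; rewrite ?flip_at ?flipK.
Qed.

Definition prob_off (p : vec R m) t (y : outcome m) : R :=
  \prod_(s | s != t) (if y s then p s else 1 - p s).

Lemma prob_y_split p t y : prob_y p y = (if y t then p t else 1 - p t) * prob_off p t y.
Proof. by rewrite /prob_y (bigD1 t). Qed.

Lemma prob_off_flip p t y : prob_off p t (flip t y) = prob_off p t y.
Proof. by apply: eq_bigr => s hs; rewrite flip_off. Qed.

Lemma prob_off_ge0 p t y : valid p -> 0 <= prob_off p t y.
Proof. by move=> vp; apply: prodr_ge0 => s _; have /andP[? ?] := vp s; case: ifP; lra. Qed.

Lemma prob_off_pos p t : valid p -> exists2 y : outcome m, ~~ y t & 0 < prob_off p t y.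
Proof.
move=> vp; exists [ffun s => (s != t) && (1/2 <= p s)]; first by rewrite ffunE eqxx.
apply: prodr_gt0 => s hs; rewrite ffunE hs /=; have /andP[? ?] := vp s; case: ifP; lra.
Qed.

Definition score_off (r : vec R m) t (y : outcome m) : R :=
  \sum_(s | s != t) qscore (r s) (y s).

Lemma weight_split (v : vec R m) t y :
  weight eta v y = expR (eta * score_off v t y) * expR (eta * qscore (v t) (y t)).
Proof. by rewrite /weight /total_score (bigD1 t) //= addrC mulrDr expRD. Qed.

Lemma score_off_flip v t y : score_off v t (flip t y) = score_off v t y.
Proof. by apply: eq_bigr => s hs; rewrite flip_off. Qed.

Lemma score_off_agree (v r : vec R m) t y : (forall s, s != t -> v s = r s) ->
  score_off v t y = score_off r t y.
Proof. by move=> h; apply: eq_bigr => s hs; rewrite h. Qed.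

Lemma others_weight_gt0 (Rp : profile R n m) i y : (2 <= n)%N -> 0 < others_weight eta Rp i y.
Proof.
move=> hn; have [j hj] : exists j : 'I_n, j != i.
  have [n1 n2] : (0 < n)%N /\ (1 < n)%N by split; [apply: leq_trans hn|].
  case: (eqVneq i (Ordinal n1)) => [->|ne]; last by exists (Ordinal n1); rewrite eq_sym.
  by exists (Ordinal n2); apply/eqP => /(congr1 val).
rewrite /others_weight (bigD1 j) //= ltr_pwDl ?expR_gt0 //.
by apply: sumr_ge0 => k _; apply: expR_ge0.
Qed.

(* Flipping one event changes every valid forecaster's score by at most 1, hence
   the others' total weight by a factor at most expR eta. *)
Lemma others_weight_flip (Rp : profile R n m) i t y : 0 < eta ->
  (forall j, j != i -> valid (Rp j)) ->
  others_weight eta Rp i y <= expR eta * others_weight eta Rp i (flip t y).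
Proof.
move=> he vR; rewrite /others_weight mulr_sumr; apply: ler_sum => j hj.
rewrite !(weight_split _ t) score_off_flip flip_at mulrCA.
by apply: ler_wpM2l; [exact: expR_ge0 | apply: (expR_score_shift _ _ he); exact: (vR j hj t)].
Qed.

Lemma others_weight_comparable (Rp : profile R n m) i t y : (2 <= n)%N -> 0 < eta ->
  (forall j, j != i -> valid (Rp j)) ->
  comparable_weights eta (others_weight eta Rp i y) (others_weight eta Rp i (flip t y)).
Proof.
move=> hn he vR; have h0 := others_weight_flip t y he vR.
have h1 := others_weight_flip t (flip t y) he vR; rewrite flipK in h1.
by split => //; apply: others_weight_gt0.
Qed.

Lemma expected_by_pairs (Rp : profile R n m) i (p r v : vec R m) t :
  (forall s, s != t -> v s = r s) ->
  expected (MW eta) (upd Rp i v) p i =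
  \sum_(y : outcome m | ~~ y t) prob_off p t y *
    pair_share eta (expR (eta * score_off r t y))
      (others_weight eta Rp i y) (others_weight eta Rp i (flip t y)) (p t) (v t).
Proof.
move=> agree; rewrite /expected (sum_outcome_pairs t); apply: eq_bigr => y /negbTE yt.
rewrite !MW_upd !(prob_y_split _ t) prob_off_flip !(weight_split _ t) score_off_flip.
by rewrite flip_at yt /= (score_off_agree _ agree) /pair_share; ring.
Qed.

Lemma coordinate_change_dominates (i : 'I_n) (p r rh : vec R m) t :
  (2 <= n)%N -> 0 < eta -> valid p -> (forall s, s != t -> rh s = r s) ->
  (forall w C0 C1, 0 < w -> comparable_weights eta C0 C1 ->
     pair_share eta w C0 C1 (p t) (r t) < pair_share eta w C0 C1 (p t) (rh t)) ->
  strictly_dominates (MW eta) i p rh r.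
Proof.
move=> hn he vp agree better Rp vR.
rewrite (expected_by_pairs Rp i p agree) (@expected_by_pairs Rp i p r r t (fun _ _ => erefl)).
pose ps y x := pair_share eta (expR (eta * score_off r t y))
  (others_weight eta Rp i y) (others_weight eta Rp i (flip t y)) (p t) x.
have gain_gt0 y : 0 < ps y (rh t) - ps y (r t).
  by rewrite subr_gt0; apply: better; [exact: expR_gt0 | exact: others_weight_comparable].
rewrite -subr_gt0 -sumrB (eq_bigr (fun y => prob_off p t y * (ps y (rh t) - ps y (r t)))) => [|y _];
  last by rewrite mulrBr.
have [y0 y0t Qy0] := prob_off_pos t vp.
have term_ge0 y : 0 <= prob_off p t y * (ps y (rh t) - ps y (r t)).
  by rewrite mulr_ge0 ?prob_off_ge0 // ltW.
rewrite lt_def psumr_neq0 ?sumr_ge0 //.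
by rewrite andbT; apply/hasP; exists y0; rewrite ?mem_index_enum // y0t mulr_gt0.
Qed.

End Domination.

Section FarReports.
Variables (R : realType) (n m : nat) (eta : R).

Lemma improvable_dominated (i : 'I_n) (p r : vec R m) t x : (2 <= n)%N -> 0 < eta ->
  valid p -> valid r -> 0 <= x <= 1 ->
  (forall w C0 C1, 0 < w -> comparable_weights eta C0 C1 ->
     pair_share eta w C0 C1 (p t) (r t) < pair_share eta w C0 C1 (p t) x) ->
  exists rh, valid rh /\ strictly_dominates (MW eta) i p rh r.
Proof.
move=> hn he vp vr hx better; exists (fun s => if s == t then x else r s); split.
  by move=> s; case: eqP.
apply: (coordinate_change_dominates (t := t)) => //.
- by move=> s /negbTE ->.
- by move=> w C0 C1 hw hC; rewrite eqxx; apply: better.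
Qed.

Lemma far_report_dominated (i : 'I_n) (p r : vec R m) t : (2 <= n)%N -> 0 < eta -> eta < 1/4 ->
  valid p -> valid r ->
  4 * eta < `|r t - p t| -> exists rh, valid rh /\ strictly_dominates (MW eta) i p rh r.
Proof.
move=> hn he0 he1 vp vr; have /andP[r0 r1] := vr t; have /andP[p0 p1] := vp t.
rewrite ltr_normr => /orP[up | down].
- apply: (@improvable_dominated i p r t (p t + 4 * eta)) => //; first by apply/andP; split; lra.
  by move=> w C0 C1 hw hC; apply: pair_share_lt_up => //; lra.
- apply: (@improvable_dominated i p r t (p t - 4 * eta)) => //; first by apply/andP; split; lra.
  by move=> w C0 C1 hw hC; apply: pair_share_lt_down => //; lra.
Qed.

End FarReports.

Theorem mainTheorem8 (R : realType) (n m : nat) (eta : R) :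
  (2 <= n)%N -> 0 < eta -> eta < 1 / 4 ->
  approx_truthful (@MW R n m eta) (4 * eta).
Proof.
move=> hn he0 he1 i p vp; split; first by exists p; apply: truthful_undominated.
move=> r [vr not_dominated] t; rewrite leNgt; apply/negP => far; apply: not_dominated.
exact: (far_report_dominated i hn he0 he1 vp vr far).
Qed.
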